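(* Let $q$ be a self-join-free Boolean conjunctive query, let $q_0\subseteq q$, and let $\mathbf{db}$ be a database. If $\mathbf{o}$ is a garbage set for $q_0$ in $\mathbf{db}$ and $\mathbf{p}$ is a garbage set for $q_0$ in $\mathbf{db}\setminus\mathbf{o}$, then $\mathbf{o}\cup\mathbf{p}$ is a garbage set for $q_0$ in $\mathbf{db}$.
   Context: Every relation name has a signature $[n,k]$ ($1\le k\le n$; primary-key positions $1,\dots,k$) and a mode in $\{\mathsf{c},\mathsf{i}\}$. Facts are variable-free atoms; facts are key-equal if same relation name and same primary-key values. A database is a finite set of facts with no two distinct key-equal facts of mode $\mathsf{c}$, all of whose relation names occur in $q$. The block of a fact $A$ in $\mathbf{db}$ is the set of facts of $\mathbf{db}$ key-equal to $A$. A repair of a set of facts is a maximal subset without two distinct key-equal facts. A self-join-free Boolean conjunctive query is a finite set of atoms with distinct relation names; for a fact $A$, $\mathrm{atom}(A)$ is the atom of $q$ with the same relation name. A subset $\mathbf{o}\subseteq\mathbf{db}$ is a garbage set for $q_0$ in $\mathbf{db}$ if (1) for every $A\in\mathbf{o}$, $\mathrm{atom}(A)\in q_0$ and the block of $A$ in $\mathbf{db}$ is included in $\mathbf{o}$; and (2) there is a repair $\mathbf{r}$ of $\mathbf{o}$ such that for every valuation $\theta$ of the variables of $q$, if $\theta(q)\subseteq(\mathbf{db}\setminus\mathbf{o})\cup\mathbf{r}$ then $\theta(q_0)\cap\mathbf{r}=\emptyset$. *)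

From Stdlib Require Import List Arith.
Import ListNotations.
Set Implicit Arguments.

Inductive mode := mode_c | mode_i.

Section CQA.
Variables (Rel Const Var : Type).
(* signature [ar R, kl R]: primary-key positions 1..kl R *)
Variables (ar kl : Rel -> nat) (md : Rel -> mode).

Record dbfact := Fact { frel : Rel; fargs : list Const }.
Record atom := Atom { arel : Rel; aargs : list (Var + Const) }.

Definition key_equal (A B : dbfact) : Prop :=
  frel A = frel B /\ firstn (kl (frel A)) (fargs A) = firstn (kl (frel B)) (fargs B).

Definition finite_set (S : dbfact -> Prop) : Prop :=
  exists l : list dbfact, forall A, S A -> In A l.

Definition sjf_query (q : list atom) : Prop :=
  NoDup (map arel q) /\ forall a, In a q -> length (aargs a) = ar (arel a).

Definition is_database (q : list atom) (db : dbfact -> Prop) : Prop :=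
  finite_set db /\
  (forall A, db A -> length (fargs A) = ar (frel A)) /\
  (forall A B, db A -> db B -> md (frel A) = mode_c -> key_equal A B -> A = B) /\
  (forall A, db A -> exists a, In a q /\ arel a = frel A).

Definition block (db : dbfact -> Prop) (A : dbfact) : dbfact -> Prop :=
  fun B => db B /\ key_equal B A.

Definition consistent (S : dbfact -> Prop) : Prop :=
  forall A B, S A -> S B -> key_equal A B -> A = B.

Definition is_repair (S r : dbfact -> Prop) : Prop :=
  (forall A, r A -> S A) /\ consistent r /\
  (forall r' : dbfact -> Prop, (forall A, r A -> r' A) -> (forall A, r' A -> S A) ->
     consistent r' -> forall A, r' A -> r A).

Definition inst (theta : Var -> Const) (a : atom) : dbfact :=
  Fact (arel a) (map (fun t => match t with inl x => theta x | inr c => c end) (aargs a)).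

(* atom(A) \in q0, where atom(A) is the atom of q with the relation name of A *)
Definition atom_in (q q0 : list atom) (A : dbfact) : Prop :=
  exists a, In a q /\ arel a = frel A /\ In a q0.

Definition garbage_set (q q0 : list atom) (db o : dbfact -> Prop) : Prop :=
  (forall A, o A -> db A) /\
  (forall A, o A -> atom_in q q0 A /\ (forall B, block db A B -> o B)) /\
  exists r, is_repair o r /\
    forall theta : Var -> Const,
      (forall a, In a q -> (db (inst theta a) /\ ~ o (inst theta a)) \/ r (inst theta a)) ->
      forall a, In a q0 -> ~ r (inst theta a).

End CQA.

(* The garbage sets o and p are key-separated: a fact of p lies in db \ o, so
   were it key-equal to a fact of o it would belong to o's block, hence to o.
   Therefore the union of repairs r_o and r_p of o and p is a repair of o ∪ p.
   Now let θ(q) ⊆ (db \ (o ∪ p)) ∪ r_o ∪ r_p.  As r_p ⊆ db \ o, this gives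
   θ(q) ⊆ (db \ o) ∪ r_o, so θ(q0) misses r_o; since r_o consists of facts
   whose atom lies in q0 and q is self-join-free, θ(q) misses r_o altogether.
   Hence θ(q) ⊆ ((db \ o) \ p) ∪ r_p, and θ(q0) misses r_p as well. *)
From Stdlib Require Import List Arith.

Set Implicit Arguments.
Unset Strict Implicit.

Lemma NoDup_map_inj_in (A B : Type) (f : A -> B) (l : list A) :
  NoDup (map f l) -> forall x y, In x l -> In y l -> f x = f y -> x = y.
Proof.
  induction l as [|z l IH]; simpl; intros Hnd x y Hx Hy Hxy; [contradiction|].
  inversion Hnd as [|? ? Hz Hnd']; subst.
  destruct Hx as [<-|Hx], Hy as [<-|Hy]; auto.
  - exfalso; apply Hz; rewrite Hxy; apply in_map; assumption.
  - exfalso; apply Hz; rewrite <- Hxy; apply in_map; assumption.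
Qed.

Section GarbageUnion.
Variables (Rel Const Var : Type) (kl : Rel -> nat).
Notation fact := (dbfact Rel Const).
Implicit Types (db o p r S : fact -> Prop) (q : list (atom Rel Const Var))
  (theta : Var -> Const).

Lemma key_equal_sym (A B : fact) : key_equal kl A B -> key_equal kl B A.
Proof. intros [Hrel Hkey]; split; symmetry; assumption. Qed.

Definition key_separated (S1 S2 : fact -> Prop) : Prop :=
  forall A B, S1 A -> S2 B -> ~ key_equal kl A B.

Definition block_closed db o : Prop :=
  forall A, o A -> forall B, block kl db A B -> o B.

Definition garbage_repair q (q0 : list (atom Rel Const Var)) db o r : Prop :=
  forall theta : Var -> Const,
    (forall a, In a q -> (db (inst theta a) /\ ~ o (inst theta a)) \/ r (inst theta a)) ->
    forall a, In a q0 -> ~ r (inst theta a).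

Lemma key_separated_sym (S1 S2 : fact -> Prop) :
  key_separated S1 S2 -> key_separated S2 S1.
Proof. intros Hsep A B HA HB Hkey; apply (Hsep B A HB HA), key_equal_sym, Hkey. Qed.

Lemma key_separated_of_block_closed db o p :
  block_closed db o -> (forall A, p A -> db A /\ ~ o A) -> key_separated p o.
Proof.
  intros Hclosed Hp A B HpA HoB Hkey.
  destruct (Hp A HpA) as [HdbA HoA].
  apply HoA, (Hclosed B HoB); split; assumption.
Qed.

Lemma block_closed_union db o p :
  block_closed db o -> block_closed (fun A => db A /\ ~ o A) p ->
  (forall A, p A -> db A /\ ~ o A) ->
  block_closed db (fun A => o A \/ p A).
Proof.
  intros Ho Hp Hpdb A [HoA|HpA] B [HdbB Hkey].
  - left; apply (Ho A HoA); split; assumption.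
  - right; apply (Hp A HpA); split; [split; [assumption|] | assumption].
    intro HoB; apply (key_separated_of_block_closed Ho Hpdb HpA HoB).
    apply key_equal_sym; assumption.
Qed.

Lemma is_repair_max_in S r r' :
  is_repair kl S r -> (forall A, r A -> r' A) -> consistent kl r' ->
  forall A, r' A -> S A -> r A.
Proof.
  intros [Hr [_ Hmax]] Hsub Hcons A HA HSA.
  apply (Hmax (fun B => r' B /\ S B)).
  - intros B HB; split; [apply Hsub | apply Hr]; exact HB.
  - intros B HB; apply HB.
  - intros B C HB HC; apply Hcons; [apply HB|apply HC].
  - split; assumption.
Qed.

Lemma is_repair_union (S1 S2 r1 r2 : fact -> Prop) :
  key_separated S1 S2 -> is_repair kl S1 r1 -> is_repair kl S2 r2 ->
  is_repair kl (fun A => S1 A \/ S2 A) (fun A => r1 A \/ r2 A).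
Proof.
  intros Hsep Hr1 Hr2.
  pose proof Hr1 as [Hsub1 [Hcons1 _]]; pose proof Hr2 as [Hsub2 [Hcons2 _]].
  split; [|split].
  - intros A [H|H]; [left|right]; auto.
  - intros A B [HA|HA] [HB|HB] Hkey; auto; exfalso.
    + exact (Hsep A B (Hsub1 A HA) (Hsub2 B HB) Hkey).
    + exact (key_separated_sym Hsep (Hsub2 A HA) (Hsub1 B HB) Hkey).
  - intros r' Hsub' HS' Hcons' A HA.
    destruct (HS' A HA) as [H1|H2].
    + left; exact (is_repair_max_in Hr1 (fun B HB => Hsub' B (or_introl HB)) Hcons' HA H1).
    + right; exact (is_repair_max_in Hr2 (fun B HB => Hsub' B (or_intror HB)) Hcons' HA H2).
Qed.

Lemma atom_in_inst q (q0 : list (atom Rel Const Var)) theta a :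
  NoDup (map (@arel Rel Const Var) q) -> In a q ->
  atom_in q q0 (inst theta a) -> In a q0.
Proof.
  intros Hnd Ha [a' [Ha' [Hrel Ha'0]]].
  now rewrite <- (NoDup_map_inj_in Hnd Ha' Ha Hrel).
Qed.

Lemma garbage_repair_avoids_query q (q0 : list (atom Rel Const Var)) db o r theta :
  NoDup (map (@arel Rel Const Var) q) ->
  (forall A, r A -> atom_in q q0 A) ->
  garbage_repair q q0 db o r ->
  (forall a, In a q -> (db (inst theta a) /\ ~ o (inst theta a)) \/ r (inst theta a)) ->
  forall a, In a q -> ~ r (inst theta a).
Proof.
  intros Hnd Hr0 Hgarb Hth a Ha HrA.
  apply (Hgarb theta Hth a (atom_in_inst Hnd Ha (Hr0 _ HrA)) HrA).
Qed.

Lemma garbage_repair_union q (q0 : list (atom Rel Const Var)) db o p (ro rp : fact -> Prop) :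
  NoDup (map (@arel Rel Const Var) q) ->
  (forall A, ro A -> atom_in q q0 A) ->
  (forall A, rp A -> db A /\ ~ o A) ->
  garbage_repair q q0 db o ro ->
  garbage_repair q q0 (fun A => db A /\ ~ o A) p rp ->
  garbage_repair q q0 db (fun A => o A \/ p A) (fun A => ro A \/ rp A).
Proof.
  intros Hnd Hro0 Hrp Ho Hp theta Hth.
  assert (Hth_o : forall a, In a q ->
      (db (inst theta a) /\ ~ o (inst theta a)) \/ ro (inst theta a)).
  { intros a Ha; destruct (Hth a Ha) as [Hfree|[H|H]];
      [left; tauto | right; exact H | left; exact (Hrp _ H)]. }
  pose proof (garbage_repair_avoids_query Hnd Hro0 Ho Hth_o) as Hro.
  assert (Hrp_free : forall a, In a q0 -> ~ rp (inst theta a)).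
  { apply Hp; intros a Ha.
    destruct (Hth a Ha) as [Hfree|[H|H]];
      [left; tauto | now destruct (Hro a Ha) | right; exact H]. }
  intros a Ha0 [H|H]; [apply (Ho theta Hth_o a Ha0)|apply (Hrp_free a Ha0)]; exact H.
Qed.

End GarbageUnion.

Theorem lemma32 (Rel Const Var : Type) (ar kl : Rel -> nat) (md : Rel -> mode)
  (q q0 : list (atom Rel Const Var)) (db o p : dbfact Rel Const -> Prop) :
  (forall R, 1 <= kl R <= ar R) ->
  sjf_query ar q ->
  incl q0 q ->
  is_database ar kl md q db ->
  garbage_set kl q q0 db o ->
  garbage_set kl q q0 (fun A => db A /\ ~ o A) p ->
  garbage_set kl q q0 db (fun A => o A \/ p A).
Proof.
  intros _ [Hnd _] _ _ [Hodb [Ho [ro [Hro Hgo]]]] [Hpdb [Hp [rp [Hrp Hgp]]]].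
  assert (Ho_closed : block_closed kl db o) by (intros A HA; apply Ho, HA).
  assert (Hp_closed : block_closed kl (fun A => db A /\ ~ o A) p)
    by (intros A HA; apply Hp, HA).
  split; [|split].
  - intros A [HA|HA]; [apply Hodb | apply Hpdb]; assumption.
  - intros A HA; split.
    + destruct HA as [HA|HA]; [apply Ho|apply Hp]; assumption.
    + apply (block_closed_union Ho_closed Hp_closed Hpdb HA).
  - exists (fun A => ro A \/ rp A); split.
    + apply is_repair_union; [|exact Hro|exact Hrp].
      exact (key_separated_sym (key_separated_of_block_closed Ho_closed Hpdb)).
    + apply garbage_repair_union; [exact Hnd| | |exact Hgo|exact Hgp].
      * intros A HA; apply Ho, (proj1 Hro), HA.
      * intros A HA; apply Hpdb, (proj1 Hrp), HA.
Qed.
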